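(* Let $f\colon K\to R$ be a homomorphism of (nonunital) rings, and assume that $KR\subset RK$ in $R$ (for example, $RK=R$). Then (a) any right $R$-module that is t-unital as a right $K$-module is also t-unital as a right $R$-module; (b) any left $R$-module that is c-unital as a left $K$-module is also c-unital as a left $R$-module. In particular, if the ring $R$ is commutative, then (a) and (b) hold for any homomorphism $f$.
   Context: Rings are associative, not necessarily unital; modules are not assumed unital. $KR$ denotes the additive subgroup of $R$ generated by products $f(k)r$, and $RK$ the subgroup generated by $rf(k)$, for $k\in K$, $r\in R$; $R$-modules are $K$-modules via $f$. A right module $N$ over a ring $S$ is t-unital if $N\otimes_S S\to N$, $n\otimes s\mapsto ns$, is an isomorphism; a left $S$-module $P$ is c-unital if $P\to\mathrm{Hom}_S(S,P)$, $p\mapsto(s\mapsto sp)$, is an isomorphism (with $\mathrm{Hom}_S$ denoting left $S$-module homomorphisms). *)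

From HB Require Import structures.
From mathcomp Require Import all_boot all_algebra.
Set Implicit Arguments. Unset Strict Implicit. Unset Printing Implicit Defensive.
Import GRing.Theory.
Local Open Scope ring_scope.

Definition nuring_axioms (R : zmodType) (mul : R -> R -> R) : Prop :=
  [/\ associative mul,
      (forall x y z, mul (x + y) z = mul x z + mul y z) &
      (forall x y z, mul x (y + z) = mul x y + mul x z)].

Definition nuring_hom (K R : zmodType) (mulK : K -> K -> K) (mulR : R -> R -> R)
  (f : K -> R) : Prop :=
  (forall x y, f (x + y) = f x + f y) /\ (forall x y, f (mulK x y) = mulR (f x) (f y)).

Definition rmod_axioms (S : zmodType) (mulS : S -> S -> S) (N : zmodType)
  (act : N -> S -> N) : Prop :=
  [/\ (forall n s s', act (act n s) s' = act n (mulS s s')),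
      (forall n n' s, act (n + n') s = act n s + act n' s) &
      (forall n s s', act n (s + s') = act n s + act n s')].

Definition lmod_axioms (S : zmodType) (mulS : S -> S -> S) (P : zmodType)
  (act : S -> P -> P) : Prop :=
  [/\ (forall s s' p, act s (act s' p) = act (mulS s s') p),
      (forall s p p', act s (p + p') = act s p + act s p') &
      (forall s s' p, act (s + s') p = act s p + act s' p)].

Definition balanced (S : zmodType) (mulS : S -> S -> S) (N : zmodType)
  (act : N -> S -> N) (A : zmodType) (b : N -> S -> A) : Prop :=
  [/\ (forall n n' s, b (n + n') s = b n s + b n' s),
      (forall n s s', b n (s + s') = b n s + b n s') &
      (forall n s s', b (act n s) s' = b n (mulS s s'))].

(* t-unital: the map N (x)_S S -> N, n (x) s |-> ns, is an isomorphism, i.e.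
   (N, act) itself satisfies the universal property of N (x)_S S. *)
Definition t_unital (S : zmodType) (mulS : S -> S -> S) (N : zmodType)
  (act : N -> S -> N) : Prop :=
  forall (A : zmodType) (b : N -> S -> A), balanced mulS act b ->
    exists g : N -> A,
      ((forall x y, g (x + y) = g x + g y) /\ (forall n s, g (act n s) = b n s)) /\
      (forall g' : N -> A,
         (forall x y, g' (x + y) = g' x + g' y) ->
         (forall n s, g' (act n s) = b n s) -> g =1 g').

Definition lhom (S : zmodType) (mulS : S -> S -> S) (P : zmodType)
  (act : S -> P -> P) (h : S -> P) : Prop :=
  (forall x y, h (x + y) = h x + h y) /\ (forall s s', h (mulS s s') = act s (h s')).

(* c-unital: p |-> (s |-> sp) is a bijection P -> Hom_S(S, P). *)
Definition c_unital (S : zmodType) (mulS : S -> S -> S) (P : zmodType)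
  (act : S -> P -> P) : Prop :=
  (forall p p', (forall s, act s p = act s p') -> p = p') /\
  (forall h : S -> P, lhom mulS act h -> exists p, forall s, h s = act s p).

Definition addgen (R : zmodType) (X : R -> Prop) (x : R) : Prop :=
  forall Q : R -> Prop, Q 0 -> (forall a b, Q a -> Q b -> Q (a - b)) ->
    (forall a, X a -> Q a) -> Q x.

Definition KR (K R : zmodType) (mulR : R -> R -> R) (f : K -> R) : R -> Prop :=
  addgen (fun x => exists k r, x = mulR (f k) r).
Definition RK (K R : zmodType) (mulR : R -> R -> R) (f : K -> R) : R -> Prop :=
  addgen (fun x => exists k r, x = mulR r (f k)).

From HB Require Import structures.
From mathcomp Require Import all_boot all_algebra.
From mathcomp Require Import boolp.
Set Implicit Arguments. Unset Strict Implicit. Unset Printing Implicit Defensive.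
Import GRing.Theory.
Local Open Scope ring_scope.

(* t-unitality of N over K forces N to be additively generated by N f(K), and
   c-unitality of P over K lets us test an element p of P through the products
   f(k) p.  Either way one only has to compare two additive functions on
   elements f(k) r; these lie in KR, hence in RK, i.e. are sums of elements
   r' f(k'), on which the two functions agree because f(k') can be moved
   across the module action. *)

Section AdditiveMaps.
Variables (A B : zmodType) (g : A -> B).
Hypothesis gD : {morph g : x y / x + y}.

Lemma morph_add0 : g 0 = 0.
Proof. by apply: (@addrI _ (g 0)); rewrite -gD !addr0. Qed.

Lemma morph_addB : {morph g : x y / x - y}.
Proof.
move=> x y; rewrite gD; congr (_ + _); apply/eqP.
by rewrite -subr_eq0 opprK -gD addNr morph_add0.
Qed.

End AdditiveMaps.

Section AdditiveGeneration.
Variables (N : zmodType) (X : N -> Prop).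

Lemma addgen0 : addgen X 0.
Proof. by move=> Q. Qed.

Lemma addgenB x y : addgen X x -> addgen X y -> addgen X (x - y).
Proof. by move=> hx hy Q Q0 QB QX; apply: QB (hx Q Q0 QB QX) (hy Q Q0 QB QX). Qed.

Lemma addgen_gen x : X x -> addgen X x.
Proof. by move=> hx Q _ _; apply. Qed.

Lemma eq_morph_addgen (A : zmodType) (g h : N -> A) :
  {morph g : x y / x + y} -> {morph h : x y / x + y} ->
  (forall x, X x -> g x = h x) -> forall x, addgen X x -> g x = h x.
Proof.
move=> gD hD gh x hx; apply: (hx (fun x => g x = h x)) => [|a b ga gb|]; last exact: gh.
- by rewrite !morph_add0.
- by rewrite !morph_addB // ga gb.
Qed.

Definition addgen_pred : {pred N} := fun x => `[< addgen X x >].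

Lemma addgen_pred_zmod_closed : zmod_closed addgen_pred.
Proof.
split=> [|x y /asboolP hx /asboolP hy]; apply/asboolP; first exact: addgen0.
exact: addgenB.
Qed.

HB.instance Definition _ :=
  GRing.isZmodClosed.Build N addgen_pred addgen_pred_zmod_closed.

Lemma addgen_kernel :
  exists (Q : zmodType) (q : N -> Q),
    {morph q : x y / x + y} /\ forall x, q x = 0 <-> addgen X x.
Proof.
exists {ideal_quot addgen_pred}%qT, \pi%qT.
split=> [x y | x]; first exact: Quotient.pi_add.
have := Quotient.idealrBE addgen_pred x 0; rewrite subr0 pi_zeror => kerE.
split=> [qx0 | hx]; first by have /asboolP : x \in addgen_pred by rewrite kerE qx0.
by apply/eqP; rewrite -kerE; apply/asboolP.
Qed.

End AdditiveGeneration.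

Lemma addgen_sub (N : zmodType) (X Y : N -> Prop) :
  (forall x, X x -> addgen Y x) -> forall x, addgen X x -> addgen Y x.
Proof.
by move=> XY x hx; apply: (hx (addgen Y)); [exact: addgen0 | exact: addgenB | exact: XY].
Qed.

(* Both the quotient map N -> N / <N S> and the zero map solve the universal
   problem for the zero balanced map, so they coincide. *)
Lemma t_unital_addgen_act (S : zmodType) (mulS : S -> S -> S) (N : zmodType)
    (act : N -> S -> N) :
  t_unital mulS act -> forall x, addgen (fun y => exists n s, y = act n s) x.
Proof.
move=> tN x; have [Q [q [qD kerq]]] := addgen_kernel (fun y => exists n s, y = act n s).
apply/kerq.
have zero_balanced : balanced mulS act (fun _ _ => 0 : Q) by split=> *; rewrite ?addr0.
have [g [_ g_uniq]] := tN _ _ zero_balanced.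
rewrite -(g_uniq q qD) => [|n s]; last by apply/kerq; apply: addgen_gen; exists n, s.
by rewrite (g_uniq (fun _ => 0)) // => *; rewrite addr0.
Qed.

Section RestrictionOfScalars.
Variables (K R : zmodType) (mulK : K -> K -> K) (mulR : R -> R -> R) (f : K -> R).
Hypothesis fD : {morph f : x y / x + y}.
Hypothesis fM : forall x y, f (mulK x y) = mulR (f x) (f y).

Lemma KR_sub_RK_comm :
  (forall x y, mulR x y = mulR y x) -> forall x, KR mulR f x -> RK mulR f x.
Proof.
move=> mulRC; apply: addgen_sub => _ [k [r ->]].
by apply: addgen_gen; exists k, r; rewrite mulRC.
Qed.

Hypothesis KR_sub_RK : forall x, KR mulR f x -> RK mulR f x.

Lemma morph_eq_KR_of_RK (A : zmodType) (g h : R -> A) :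
  {morph g : x y / x + y} -> {morph h : x y / x + y} ->
  (forall k r, g (mulR r (f k)) = h (mulR r (f k))) ->
  forall k r, g (mulR (f k) r) = h (mulR (f k) r).
Proof.
move=> gD hD gh k r.
have: RK mulR f (mulR (f k) r) by apply: KR_sub_RK; apply: addgen_gen; exists k, r.
by apply: eq_morph_addgen gD hD _ _ => _ [k' [r' ->]].
Qed.

Section RightModules.
Variables (N : zmodType) (act : N -> R -> N).
Hypothesis actN : rmod_axioms mulR act.
Hypothesis tK : t_unital mulK (fun n k => act n (f k)).

Lemma balanced_restrict (A : zmodType) (b : N -> R -> A) :
  balanced mulR act b -> balanced mulK (fun n k => act n (f k)) (fun n k => b n (f k)).
Proof. by case=> bDl bDr bA; split=> *; rewrite ?fD ?fM. Qed.

Lemma restricted_solution_extends (A : zmodType) (b : N -> R -> A) (g : N -> A) :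
  balanced mulR act b -> {morph g : x y / x + y} ->
  (forall n k, g (act n (f k)) = b n (f k)) -> forall n r, g (act n r) = b n r.
Proof.
case: actN => actA actDl actDr [bDl bDr bA] gD gb n r.
have := t_unital_addgen_act tK n.
apply: (eq_morph_addgen (g := fun n => g (act n r)) (h := fun n => b n r)).
- by move=> x y; rewrite actDl gD.
- by move=> x y; rewrite bDl.
- move=> _ [n' [k ->]]; rewrite actA bA.
  apply: (morph_eq_KR_of_RK (g := fun x => g (act n' x)) (h := b n')).
  + by move=> x y; rewrite actDr gD.
  + exact: bDr.
  + by move=> k' r' /=; rewrite -actA gb bA.
Qed.

Lemma t_unital_of_restriction : t_unital mulR act.
Proof.
move=> A b bal; have [g [[gD gb] g_uniq]] := tK (balanced_restrict bal).
exists g; split; first by split=> //; apply: restricted_solution_extends.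
by move=> g' g'D g'b; apply: g_uniq.
Qed.

End RightModules.

Section LeftModules.
Variables (P : zmodType) (act : R -> P -> P).
Hypothesis actP : lmod_axioms mulR act.
Hypothesis cK : c_unital mulK (fun k p => act (f k) p).

Lemma lhom_restrict (h : R -> P) :
  lhom mulR act h -> lhom mulK (fun k p => act (f k) p) (fun k => h (f k)).
Proof. by case=> hD hM; split=> *; rewrite ?fD ?hD ?fM ?hM. Qed.

Lemma c_unital_of_restriction : c_unital mulR act.
Proof.
case: actP cK => actA actDr actDl [inj surj]; split=> [p p' eq_act|h hR].
  by apply: inj => k; apply: eq_act.
have [p hp] := surj _ (lhom_restrict hR); case: hR => hD hM.
exists p => r; apply: inj => k; rewrite /= -hM actA.
apply: (morph_eq_KR_of_RK (h := fun x => act x p)) => // k' r'.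
by rewrite hM hp actA.
Qed.

End LeftModules.

End RestrictionOfScalars.

Theorem proposition9p6
  (K R : zmodType) (mulK : K -> K -> K) (mulR : R -> R -> R)
  (hK : nuring_axioms mulK) (hR : nuring_axioms mulR)
  (f : K -> R) (hf : nuring_hom mulK mulR f)
  (hKR : (forall x, KR mulR f x -> RK mulR f x) \/
         (forall x y : R, mulR x y = mulR y x)) :
  (forall (N : zmodType) (act : N -> R -> N), rmod_axioms mulR act ->
     t_unital mulK (fun n k => act n (f k)) -> t_unital mulR act) /\
  (forall (P : zmodType) (act : R -> P -> P), lmod_axioms mulR act ->
     c_unital mulK (fun k p => act (f k) p) -> c_unital mulR act).
Proof.
case: hf => fD fM.
have KR_sub_RK : forall x, KR mulR f x -> RK mulR f x.
  by case: hKR => [// | mulRC]; apply: KR_sub_RK_comm.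
split=> [N act | P act].
- exact: t_unital_of_restriction.
- exact: c_unital_of_restriction.
Qed.
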